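(* Let $n\ge 2$, $1\le p<\infty$, $q=1/p$. Let $\lambda=(\lambda_{ij})$ be an $n\times n$ matrix with nonnegative entries and all row sums equal to $1$, such that $\mathrm{per}(\lambda^q)>0$. Define the $n\times n$ matrix $\bar\lambda$ by $$\bar\lambda_{ij} = \frac{\lambda_{ij}^q\,\mathrm{per}\left(\lambda^q[i,j]\right)}{\mathrm{per}(\lambda^q)}.$$ Then $\mathrm{per}(\bar\lambda^q) \ge \mathrm{per}(\lambda^q)$.
   Context: For a matrix $M$ with nonnegative entries, $M^q$ denotes the matrix obtained by raising each entry to the $q$-th power (with $0^q=0$). For an $n\times n$ matrix $M$, $M[i,j]$ denotes the $(n-1)\times(n-1)$ matrix obtained by deleting row $i$ and column $j$, and $\lambda^q[i,j]$ denotes $(\lambda[i,j])^q$. $\mathrm{per}$ is the permanent. *)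

From HB Require Import structures.
From mathcomp Require Import all_boot all_order all_algebra all_fingroup.
From mathcomp Require Import all_classical all_reals all_analysis.
Set Implicit Arguments. Unset Strict Implicit. Unset Printing Implicit Defensive.
Import Order.TTheory GRing.Theory Num.Theory.
Local Open Scope ring_scope.

Definition per (R : comRingType) (n : nat) (A : 'M[R]_n) : R :=
  \sum_(s : 'S_n) \prod_(i < n) A i (s i).

(* Entrywise power M^q, using powR (note 0 `^ q = 0 for q <> 0). *)
Definition epow (R : realType) (m n : nat) (q : R) (A : 'M[R]_(m, n)) : 'M[R]_(m, n) :=
  map_mx (fun x => x `^ q) A.

Definition minor (R : Type) (n : nat) (i j : 'I_n.+1) (A : 'M[R]_n.+1) : 'M[R]_n :=
  row' i (col' j A).

Definition lambda_bar (R : realType) (n : nat) (q : R) (L : 'M[R]_n.+1) : 'M[R]_n.+1 :=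
  \matrix_(i, j) ((L i j) `^ q * per (minor i j (epow q L)) / per (epow q L)).

From HB Require Import structures.
From mathcomp Require Import all_boot all_order all_algebra all_fingroup.
From mathcomp Require Import all_classical all_reals all_analysis.
From mathcomp Require Import lra.
Import Order.TTheory GRing.Theory Num.Theory.
Local Open Scope ring_scope.
Set Implicit Arguments. Unset Strict Implicit. Unset Printing Implicit Defensive.

(* Write A := lambda^q, a_s := prod_k A k (s k) and b_s := prod_k lambdabar k (s k) ^ q,
   so that per A = sum_s a_s and per (lambdabar^q) = sum_s b_s.  Since ln is concave,
   b_s >= a_s + a_s (ln b_s - ln a_s) = a_s + q a_s sum_k g k (s k) with
   g := ln lambdabar - ln lambda.  Grouping the permutations by the value j = s k
   turns sum_s a_s g k (s k) into
   sum_j A k j per (A[k,j]) g k j = per A sum_j lambdabar k j g k j,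
   so per (lambdabar^q) - per A is q per A times the sum over k of the relative
   entropy of the stochastic row lambdabar k with respect to the stochastic row
   lambda k, which is nonnegative by Gibbs' inequality. *)

Section PermanentExpansion.
Variables (R : comNzRingType) (n : nat).
Implicit Types (A : 'M[R]_n.+1) (i j : 'I_n.+1).

Lemma per_laplace_term A i j :
  \sum_(s : 'S_n.+1 | s i == j) \prod_k A k (s k) = A i j * per (minor i j A).
Proof.
rewrite (reindex (lift_perm i j)); last first.
  (* a permutation with s i = j is lift_perm i j of the unique s' with
     lift j (s' k) = s (lift i k) *)
  pose unlift_fun i0 (s : 'S_n.+1) k := odflt k (unlift (s i0) (s (lift i0 k))).
  have unliftK_perm i0 (s : 'S_n.+1) k :
      lift (s i0) (unlift_fun i0 s k) = s (lift i0 k).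
    rewrite /unlift_fun; have:= neq_lift i0 k.
    by rewrite -(can_eq (permK s)) => /unlift_some[] ? ? ->.
  have unlift_inj : injective (unlift_fun i _).
    move=> s; apply: can_inj (unlift_fun (s i) s^-1%g) _ => k'.
    by rewrite {1}/unlift_fun unliftK_perm !permK liftK.
  exists (fun s => perm (unlift_inj s)) => [s _ | s].
    by apply/permP=> k'; rewrite permE /unlift_fun lift_perm_lift lift_perm_id liftK.
  move/(s _ =P _) => si; apply/permP=> k.
  case: (unliftP i k) => [k'|] ->; rewrite ?lift_perm_id //.
  by rewrite lift_perm_lift -si permE unliftK_perm.
rewrite /per big_distrr /=.
apply: eq_big => [s | s _]; first by rewrite lift_perm_id eqxx.
rewrite (bigD1_ord i) //= lift_perm_id; congr (_ * _).
by apply: eq_bigr => k _; rewrite /minor !mxE lift_perm_lift.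
Qed.

Lemma sum_perm_partition i (F : 'S_n.+1 -> R) :
  \sum_s F s = \sum_j \sum_(s : 'S_n.+1 | s i == j) F s.
Proof. exact: (partition_big (fun s : 'S_n.+1 => s i) predT). Qed.

Lemma per_expand_row A i : per A = \sum_j A i j * per (minor i j A).
Proof.
by rewrite /per (sum_perm_partition i); apply: eq_bigr => j _; rewrite per_laplace_term.
Qed.

Lemma per_weighted_sum A (f : 'I_n.+1 -> 'I_n.+1 -> R) :
  \sum_(s : 'S_n.+1) (\prod_k A k (s k)) * \sum_k f k (s k)
  = \sum_k \sum_j A k j * per (minor k j A) * f k j.
Proof.
under eq_bigr do rewrite mulr_sumr.
rewrite exchange_big /=; apply: eq_bigr => k _.
rewrite (sum_perm_partition k); apply: eq_bigr => j _.
transitivity (\sum_(s : 'S_n.+1 | s k == j) (\prod_k' A k' (s k')) * f k j).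
  by apply: eq_bigr => s /eqP ->.
by rewrite -mulr_suml per_laplace_term.
Qed.

End PermanentExpansion.

Section NonnegativePermanent.
Variables (R : numDomainType) (n : nat).

Lemma per_ge0 (A : 'M[R]_n) : (forall i j, 0 <= A i j) -> 0 <= per A.
Proof. by move=> A0; apply: sumr_ge0 => s _; apply: prodr_ge0. Qed.

Lemma prod_perm_le_laplace_term (A : 'M[R]_n.+1) (s : 'S_n.+1) i :
  (forall i j, 0 <= A i j) ->
  \prod_k A k (s k) <= A i (s i) * per (minor i (s i) A).
Proof.
move=> A0; rewrite -per_laplace_term (bigD1 s) //= lerDl.
by apply: sumr_ge0 => t _; apply: prodr_ge0.
Qed.

End NonnegativePermanent.

Section Logarithm.
Variable R : realType.

Lemma ln_prod (I : finType) (F : I -> R) :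
  (forall i, 0 < F i) -> ln (\prod_i F i) = \sum_i ln (F i).
Proof.
move=> F0; pose K (x y : R) := 0 < x /\ ln x = y.
have [] // : K (\prod_i F i) (\sum_i ln (F i)).
apply: (big_rec2 K); first by split; [exact: ltr01 | exact: ln1].
move=> i y1 y2 _ [y1_gt0 <-]; split; first by rewrite mulr_gt0.
by rewrite lnM // posrE.
Qed.

Lemma mul_lnB_le (a b : R) : 0 < a -> 0 < b -> a * (ln b - ln a) <= b - a.
Proof.
move=> a_gt0 b_gt0.
have lnB_le : ln b - ln a <= b / a - 1.
  rewrite -ln_div ?posrE // -{1}(subrK 1 (b / a)) addrC.
  by apply: le_ln1Dx; rewrite ltrBrDl subrr divr_gt0.
have -> : b - a = a * (b / a - 1).
  by rewrite mulrBr mulr1 mulrCA divff ?gt_eqF // mulr1.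
by rewrite ler_pM2l.
Qed.

Lemma gibbs_ineq (I : finType) (u v : I -> R) :
  (forall i, 0 <= u i) -> (forall i, 0 <= v i) ->
  (forall i, 0 < u i -> 0 < v i) ->
  \sum_i (u i - v i) <= \sum_i u i * (ln (u i) - ln (v i)).
Proof.
move=> u_ge0 v_ge0 uv_gt0; apply: ler_sum => i _.
have [-> | u_neq0] := eqVneq (u i) 0; first by rewrite mul0r sub0r oppr_le0.
have u_gt0 : 0 < u i by rewrite lt_def u_neq0 u_ge0.
have := mul_lnB_le u_gt0 (uv_gt0 i u_gt0).
rewrite -[ln (v i) - _]opprB mulrN; lra.
Qed.

End Logarithm.

Lemma epow_ge0 (R : realType) (m n : nat) (q : R) (M : 'M[R]_(m, n)) i j :
  0 <= epow q M i j.
Proof. by rewrite mxE powR_ge0. Qed.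

Section LambdaBar.
Variables (R : realType) (n : nat) (q : R) (L : 'M[R]_n.+1).
Hypotheses (q_gt0 : 0 < q) (L_ge0 : forall i j, 0 <= L i j).
Hypothesis per_gt0 : 0 < per (epow q L).

Local Notation A := (epow q L).
Local Notation Lb := (lambda_bar q L).

Lemma lambda_barE i j : Lb i j = A i j * per (minor i j A) / per A.
Proof. by rewrite !mxE. Qed.

Lemma lambda_bar_ge0 i j : 0 <= Lb i j.
Proof.
rewrite lambda_barE divr_ge0 ?(ltW per_gt0) // mulr_ge0 ?epow_ge0 //.
by apply: per_ge0 => k l; rewrite !mxE powR_ge0.
Qed.

Lemma lambda_bar_row_sum i : \sum_j Lb i j = 1.
Proof.
under eq_bigr do rewrite lambda_barE.
by rewrite -mulr_suml -per_expand_row divff ?gt_eqF.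
Qed.

Lemma lambda_bar_gt0 (s : 'S_n.+1) k :
  0 < \prod_k A k (s k) -> 0 < Lb k (s k).
Proof.
move=> a_gt0; rewrite lambda_barE divr_gt0 //.
exact: lt_le_trans a_gt0 (prod_perm_le_laplace_term _ _ (@epow_ge0 _ _ _ _ _)).
Qed.

Lemma epow_gt0_entry_gt0 i j : 0 < A i j -> 0 < L i j.
Proof.
move=> A_gt0; rewrite lt_def L_ge0 andbT.
by apply: contraTneq A_gt0 => L0; rewrite mxE L0 powR0 ?gt_eqF // ltxx.
Qed.

Lemma lambda_bar_gt0_entry_gt0 i j : 0 < Lb i j -> 0 < L i j.
Proof.
move=> Lb_gt0; apply: epow_gt0_entry_gt0; rewrite lt_def epow_ge0 andbT.
by apply: contraTneq Lb_gt0 => A0; rewrite lambda_barE A0 !mul0r ltxx.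
Qed.

(* q * sum_k (ln Lb - ln L) = ln b - ln a for the two products a and b, so this is the
   tangent-line bound for the concave ln at a *)
Lemma prod_perm_tangent_bound (s : 'S_n.+1) :
  \prod_k A k (s k)
    + q * ((\prod_k A k (s k)) * \sum_k (ln (Lb k (s k)) - ln (L k (s k))))
  <= \prod_k Lb k (s k) `^ q.
Proof.
set a := \prod_k _; set b := \prod_k _.
have [a0 | a_neq0] := eqVneq a 0.
  by rewrite a0 mul0r mulr0 addr0; apply: prodr_ge0 => k _; rewrite powR_ge0.
have a_gt0 : 0 < a by rewrite lt_def a_neq0 prodr_ge0 // => k _; exact: epow_ge0.
have A_gt0 k : 0 < A k (s k).
  by rewrite lt_def epow_ge0 andbT; move: a_neq0 => /prodf_neq0; apply.
have b_gt0 k : 0 < Lb k (s k) `^ q by rewrite powR_gt0 ?lambda_bar_gt0.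
have lnb : ln b = q * \sum_k ln (Lb k (s k)).
  by rewrite ln_prod // mulr_sumr; apply: eq_bigr => k _; rewrite ln_powR.
have lna : ln a = q * \sum_k ln (L k (s k)).
  by rewrite ln_prod // mulr_sumr; apply: eq_bigr => k _; rewrite mxE ln_powR.
rewrite mulrCA sumrB mulrBr -lnb -lna -lerBrDl.
by rewrite mul_lnB_le // prodr_gt0.
Qed.

Lemma per_lambda_bar_lower_bound :
  per A + q * per A * \sum_k \sum_j Lb k j * (ln (Lb k j) - ln (L k j))
  <= per (epow q Lb).
Proof.
have -> : per (epow q Lb) = \sum_(s : 'S_n.+1) \prod_k Lb k (s k) `^ q.
  by apply: eq_bigr => s _; apply: eq_bigr => k _; rewrite mxE.
apply: le_trans (ler_sum _ (fun s _ => prod_perm_tangent_bound s)).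
rewrite big_split /= -[\sum_(s : 'S_n.+1) _]/(per A) -mulr_sumr
  (per_weighted_sum A (fun k j => ln (Lb k j) - ln (L k j))).
have -> : \sum_k \sum_j A k j * per (minor k j A) * (ln (Lb k j) - ln (L k j))
          = per A * \sum_k \sum_j Lb k j * (ln (Lb k j) - ln (L k j)).
  rewrite mulr_sumr; apply: eq_bigr => k _; rewrite mulr_sumr; apply: eq_bigr => j _.
  by rewrite lambda_barE mulrA mulrCA divff ?gt_eqF // mulr1.
by rewrite mulrA.
Qed.

End LambdaBar.

Theorem lemma2p3 (R : realType) (n : nat) (p : R) (L : 'M[R]_n.+1) :
  (1 <= n)%N -> 1 <= p ->
  (forall i j, 0 <= L i j) ->
  (forall i, \sum_(j < n.+1) L i j = 1) ->
  0 < per (epow p^-1 L) ->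
  per (epow p^-1 L) <= per (epow p^-1 (lambda_bar p^-1 L)).
Proof.
move=> _ p_ge1 L_ge0 L_row_sum per_gt0.
have q_gt0 : 0 < p^-1 by rewrite invr_gt0 (lt_le_trans ltr01).
apply: le_trans (per_lambda_bar_lower_bound per_gt0).
rewrite lerDl mulr_ge0 ?mulr_ge0 ?(ltW q_gt0) ?(ltW per_gt0) //.
apply: sumr_ge0 => k _.
have := gibbs_ineq (lambda_bar_ge0 per_gt0 k) (L_ge0 k)
  (lambda_bar_gt0_entry_gt0 q_gt0 L_ge0 (i := k)).
by rewrite sumrB lambda_bar_row_sum ?L_row_sum ?subrr.
Qed.
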